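(* Let $n \ge 3$, let $x_1 < x_2 < \cdots < x_n$ and $y_1 < y_2 < \cdots < y_n$ be real numbers, and let $A = [e^{x_i y_j}]_{i,j=1,\ldots,n}$. Define $u_j := y_{j+1} - y_1$ for $j=1,\ldots,n-1$, and $s(\mathbf{x}) := x_1+\cdots+x_n$. Then $$\det(A) = e^{s(\mathbf{x}) y_1}\, u_1 u_2\cdots u_{n-1} \int_{x_{n-1}}^{x_n}\cdots\int_{x_2}^{x_3}\int_{x_1}^{x_2} \det(B)\, dt_1\, dt_2\cdots dt_{n-1},$$ where $B$ is the $(n-1)\times(n-1)$ matrix $B = [e^{t_i u_j}]_{i,j=1,\ldots,n-1}$ (depending on the integration variables $t_1,\ldots,t_{n-1}$, with $t_k$ ranging over $[x_k,x_{k+1}]$). *)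

From HB Require Import structures.
From mathcomp Require Import all_boot all_order all_algebra.
From mathcomp Require Import all_classical all_reals all_analysis.
Set Implicit Arguments. Unset Strict Implicit. Unset Printing Implicit Defensive.
Import Order.TTheory GRing.Theory Num.Theory.
Local Open Scope ring_scope.
Local Open Scope classical_set_scope.

(* Iterated integral with integration variables t_0, t_1, ... (0-based),
   t_k ranging over [x k, x (k+1)], t_0 innermost:
   iter_int x 0 f = f,
   iter_int x (k+1) f t = \int_{x k}^{x (k+1)} (iter_int x k f) (t[k := s]) ds.
   iter_int x m f t no longer depends on t_0, ..., t_(m-1). *)
Fixpoint iter_int (R : realType) (x : nat -> R) (k : nat)
    (f : (nat -> R) -> R) : (nat -> R) -> R :=
  match k with
  | 0 => f
  | k'.+1 => fun t =>
      Rintegral (@lebesgue_measure R) `[x k', x k'.+1]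
        (fun s => iter_int x k' f (fun i => if i == k' then s else t i))
  end.

From HB Require Import structures.
From mathcomp Require Import all_boot all_order all_algebra.
From mathcomp Require Import all_classical all_reals all_analysis.
From mathcomp Require Import perm.
Import Order.TTheory GRing.Theory Num.Theory.
Import numFieldNormedType.Exports.
Local Open Scope ring_scope.

(* Factor e^{x_i y_1} out of row i of A: what remains has first column all ones,
   so subtracting each row from the next leaves the determinant of the matrix
   [e^{x_{i+1} u_j} - e^{x_i u_j}].  Each entry is u_j times the integral of
   e^{t u_j} over [x_i, x_{i+1}]; expanding det B by the Leibniz formula, every
   term is a product of exponentials in separate variables t_i, so the iterated
   integral of det B factors termwise into exactly these one-dimensional
   integrals. *)

Lemma det_col0_ones (R : comNzRingType) (m : nat) (A : 'M[R]_m.+2) :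
  (forall i, A i 0 = 1) ->
  \det A = \det (\matrix_(i, j) (A (lift ord0 i) (lift ord0 j)
                                 - A (widen_ord (leqnSn m.+1) i) (lift ord0 j))).
Proof.
move=> A_col0.
(* 1 - S, with S the shift matrix, is unitriangular; multiplying by it
   subtracts from every row the previous one. *)
pose S : 'M[R]_m.+2 := \matrix_(i, k) ((i : nat) == k.+1)%:R.
have SA0 j : (S *m A) 0 j = 0.
  by rewrite mxE big1 // => k _; rewrite mxE mul0r.
have SAS i j : (S *m A) (lift ord0 i) j = A (widen_ord (leqnSn m.+1) i) j.
  rewrite mxE (bigD1 (widen_ord (leqnSn m.+1) i)) //= mxE eqxx mul1r.
  rewrite big1 ?addr0 //.
  move=> k ki; rewrite mxE /= /bump add1n eqSS.
  suff /negbTE -> : (i : nat) != k by rewrite mul0r.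
  by apply: contraNneq ki => ik; apply/eqP/val_inj.
have detIS : \det (1%:M - S) = 1.
  rewrite det_trig; last first.
    apply/is_trig_mxP => i j ij; rewrite !mxE.
    rewrite -val_eqE /= (ltn_eqF ij).
    by rewrite (ltn_eqF (ltn_trans ij (ltnSn _))) subr0.
  by apply: big1 => i _; rewrite !mxE eqxx eqn_leq ltnn andbF subr0.
have subE i j : (A - S *m A) i j = A i j - (S *m A) i j by rewrite !mxE.
rewrite -[\det A]mul1r -detIS -det_mulmx mulmxBl mul1mx.
rewrite (expand_det_col _ ord0) big_ord_recl big1 ?addr0; last first.
  by move=> i _; rewrite subE SAS !A_col0 subrr mul0r.
rewrite subE SA0 A_col0 subr0 mul1r /cofactor expr0 mul1r.
by congr (\det _); apply/matrixP => i j; rewrite !mxE -SAS mxE.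
Qed.

Lemma Rintegral_sum d (T : measurableType d) (R : realType)
    (mu : {measure set T -> \bar R}) (D : set T) (I : Type) (s : seq I)
    (f : I -> T -> R) :
  measurable D -> (forall i, mu.-integrable D (EFin \o f i)) ->
  Rintegral mu D (fun x => \sum_(i <- s) f i x) =
  \sum_(i <- s) Rintegral mu D (f i).
Proof.
move=> mD intf; elim: s => [|j s IHs].
  under eq_Rintegral do rewrite big_nil.
  by rewrite Rintegral_cst // mul0r big_nil.
under eq_Rintegral do rewrite big_cons.
rewrite RintegralD // ?IHs ?big_cons //.
rewrite (_ : _ \o _ = fun x => \sum_(i <- s) (f i x)%:E).
  by apply: integrable_sum => // i _; exact: intf.
by apply: funext => x /=; rewrite sumEFin.
Qed.

Section exponential_integrals.
Variable R : realType.
Notation mu := (@lebesgue_measure R).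

Lemma is_derive_expR_scale (c s : R) :
  is_derive s 1 (fun s => expR (s * c)) (c * expR (s * c)).
Proof.
have dsc : is_derive s 1 (fun s : R => s * c) c.
  by apply: is_derive_eq; rewrite scaler0 add0r -[RHS]mulr1.
by have := @is_derive1_comp R expR _ s _ _ (is_derive_expR _) dsc; rewrite mulrC.
Qed.

Lemma continuous_expR_scale (c : R) : continuous (fun s : R => expR (s * c)).
Proof.
move=> s; apply: continuous_comp; first exact: mulrr_continuous.
exact: continuous_expR.
Qed.

Lemma integrable_expR_scale (a b c : R) :
  mu.-integrable `[a, b] (EFin \o (fun s => expR (s * c))).
Proof.
apply: continuous_compact_integrable; first exact: segment_compact.
exact/continuous_subspaceT/continuous_expR_scale.
Qed.

Lemma Rintegral_expR_scale (a b c : R) : a < b ->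
  c * Rintegral mu `[a, b] (fun s => expR (s * c)) = expR (b * c) - expR (a * c).
Proof.
move=> ab; rewrite -RintegralZl //; last exact: integrable_expR_scale.
rewrite /Rintegral (@continuous_FTC2 R _ (fun s => expR (s * c))) //.
- have cexp : continuous (( *%R c) \o (fun s => expR (s * c)) : R -> R).
    move=> s; apply: continuous_comp; first exact: continuous_expR_scale.
    exact: mulrl_continuous.
  by have := continuous_subspaceT cexp; exact.
- split.
  + by move=> s _; case: (is_derive_expR_scale c s).
  + exact/cvg_at_right_filter/continuous_expR_scale.
  + exact/cvg_at_left_filter/continuous_expR_scale.
- by move=> s _; rewrite derive1E; case: (is_derive_expR_scale c s).
Qed.

Lemma iter_int_sum_prod_expR (x : nat -> R) (I : finType) (w : I -> R)
    (a : I -> nat -> R) (N k : nat) (t : nat -> R) : (k <= N)%N ->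
  iter_int x k (fun t => \sum_o w o * \prod_(0 <= i < N) expR (t i * a o i)) t
  = \sum_o w o * (\prod_(0 <= i < k) Rintegral mu `[x i, x i.+1]
                                       (fun s => expR (s * a o i)))
          * \prod_(k <= i < N) expR (t i * a o i).
Proof.
elim: k t => [|k IHk] t kN /=.
  by apply: eq_bigr => o _; rewrite (big_geq (leqnn 0)) mulr1.
under eq_Rintegral do rewrite IHk ?(ltnW kN) //.
set K := fun o => w o * (\prod_(0 <= i < k) Rintegral mu `[x i, x i.+1]
                              (fun s => expR (s * a o i)))
                 * \prod_(k.+1 <= i < N) expR (t i * a o i).
have split_k s : \sum_o w o * (\prod_(0 <= i < k) Rintegral mu `[x i, x i.+1]
                                        (fun s => expR (s * a o i)))
      * \prod_(k <= i < N) expR ((if i == k then s else t i) * a o i)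
    = \sum_o K o * expR (s * a o k).
  apply: eq_bigr => o _; rewrite (big_ltn kN) /= eqxx.
  rewrite (@eq_big_nat _ _ _ k.+1 N _ (fun i => expR (t i * a o i))); last first.
    by move=> i /andP[ki _]; rewrite (gtn_eqF ki).
  by rewrite /K -!mulrA [expR (s * _) * _]mulrC.
under eq_Rintegral do rewrite split_k.
rewrite Rintegral_sum //; last first.
  by move=> o; exact: integrableZl (integrable_expR_scale _ _ _).
apply: eq_bigr => o _; rewrite RintegralZl //; last exact: integrable_expR_scale.
by rewrite /K big_nat_recr //= -!mulrA [_ * Rintegral _ _ _]mulrC.
Qed.

Lemma iter_int_det_expR (x c : nat -> R) (N : nat) (t : nat -> R) :
    (forall i, (i < N)%N -> x i < x i.+1) ->
  \prod_(j < N) c j *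
    iter_int x N (fun t => \det (\matrix_(i < N, j < N) expR (t i * c j))) t
  = \det (\matrix_(i < N, j < N) (expR (x i.+1 * c j) - expR (x i * c j))).
Proof.
case: N => [_|N x_incr]; first by rewrite big_ord0 mul1r /= !det_mx00.
have Leibniz_det :
    (fun t : nat -> R => \det (\matrix_(i < N.+1, j < N.+1) expR (t i * c j))) =
    (fun t => \sum_(o : 'S_N.+1) (-1) ^+ o *
              \prod_(0 <= i < N.+1) expR (t i * c (o (inord i)))).
  apply: funext => t'; rewrite /determinant.
  apply: eq_bigr => o _; rewrite big_mkord.
  by congr (_ * _); apply: eq_bigr => i _; rewrite mxE inord_val.
rewrite Leibniz_det iter_int_sum_prod_expR // mulr_sumr; apply: eq_bigr => o _.
rewrite (big_geq (leqnn _)) mulr1 big_mkord (reindex_inj (@perm_inj _ o)) /=.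
rewrite mulrCA -big_split /=; congr (_ * _); apply: eq_bigr => i _.
by rewrite mxE inord_val Rintegral_expR_scale // x_incr.
Qed.

End exponential_integrals.

Theorem lemma1 (R : realType) (n : nat) (x y : nat -> R)
  (hn : (3 <= n)%N)
  (hx : forall i j : nat, (i < j < n)%N -> x i < x j)
  (hy : forall i j : nat, (i < j < n)%N -> y i < y j) :
  let A := \matrix_(i < n, j < n) expR (x i * y j) in
  let u := fun j : nat => y j.+1 - y 0%N in
  let s := \sum_(i < n) x i in
  let B := fun t : nat -> R =>
    \matrix_(i < n.-1, j < n.-1) expR (t i * u j) in
  \det A = expR (s * y 0%N) * (\prod_(j < n.-1) u j) *
           iter_int x n.-1 (fun t => \det (B t)) (fun _ => 0).
Proof.
case: n hn hx hy => [|[|m]] // _ hx _ A u s B /=.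
pose A' := \matrix_(i < m.+2, j < m.+2) expR (x i * (y j - y 0)).
have A_factor : A = diag_mx (\row_(i < m.+2) expR (x i * y 0)) *m A'.
  by apply/matrixP => i j; rewrite mul_diag_mx !mxE -expRD mulrBr addrC subrK.
have det_diag_factor :
    \det (diag_mx (\row_(i < m.+2) expR (x i * y 0))) = expR (s * y 0).
  by rewrite det_diag (eq_bigr _ (fun i _ => mxE _ _ _ _)) -expR_sum mulr_suml.
rewrite A_factor det_mulmx det_diag_factor -mulrA iter_int_det_expR; last first.
  by move=> i im; apply: hx; rewrite ltnSn ltnS.
rewrite det_col0_ones; last by move=> i; rewrite mxE subrr mulr0 expR0.
by congr (_ * \det _); apply/matrixP => i j; rewrite !mxE.
Qed.
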